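(* Let $X_1,\dots,X_r$ be Banach spaces and let $\|\cdot\|_\psi$ be an absolute normalized norm on $\mathbb{R}^r$. Let $T:K\to K$ be a nonexpansive mapping on a weakly compact convex subset $K$ of $(X_1\oplus\dots\oplus X_r)_\psi$ which is minimal invariant for $T$, with $\operatorname{diam}K=1$, and let $(w_n)=((x_n^{(1)},\dots,x_n^{(r)}))$ be an approximate fixed point sequence for $T$ in $K$ converging weakly to $(0,\dots,0)\in K$ with $\lim_{n\to\infty}\|x_n^{(r)}\|=0$. Let $\varepsilon_1\in(0,1)$, let $k\ge 1$ be an integer, and let $w_{n_1}=(x_{n_1}^{(1)},\dots,x_{n_1}^{(r)})$ be a term of the sequence with $\|Tw_{n_1}-w_{n_1}\|_\psi<\varepsilon_1$ and $\|x_{n_1}^{(r)}\|<\varepsilon_1$. Define $D_1^1=\{w_{n_1}\}$ and $D_{j+1}^1=\operatorname{conv}(D_j^1\cup T(D_j^1))$ for $j=1,\dots,k-1$. Then for every $u=(y^{(1)},\dots,y^{(r)})\in D_k^1$ we have $\|y^{(r)}\|<k\varepsilon_1$.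
   Context: A norm $\|\cdot\|$ on $\mathbb{R}^r$ is absolute if $\|(x_1,\dots,x_r)\|=\|(|x_1|,\dots,|x_r|)\|$ for all $x$, and normalized if $\|e_1\|=\dots=\|e_r\|=1$ for the standard unit vectors. For Banach spaces $X_1,\dots,X_r$, the direct sum $(X_1\oplus\dots\oplus X_r)_\psi$ is $X_1\times\dots\times X_r$ with the norm $\|(x_1,\dots,x_r)\|_\psi=\|(\|x_1\|,\dots,\|x_r\|)\|_\psi$. A mapping $T$ is nonexpansive if $\|Tx-Ty\|\le\|x-y\|$. $K$ is minimal invariant for $T$ if $T(K)\subset K$ and no proper nonempty weakly compact convex subset of $K$ is $T$-invariant. A sequence $(w_n)$ in $K$ is an approximate fixed point sequence if $\|Tw_n-w_n\|\to 0$. $\operatorname{conv}$ denotes the convex hull. *)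

From HB Require Import structures.
From mathcomp Require Import all_boot all_order all_algebra.
From mathcomp Require Import all_classical all_reals all_analysis.
Set Implicit Arguments. Unset Strict Implicit. Unset Printing Implicit Defensive.
Import Order.TTheory GRing.Theory Num.Theory.
Import numFieldNormedType.Exports.
Local Open Scope classical_set_scope.
Local Open Scope ring_scope.

Section PsiSum.
Variable R : realType.

Definition is_norm_Rn (m : nat) (psi : ('I_m -> R) -> R) : Prop :=
  [/\ (forall x, 0 <= psi x),
      (forall x, psi x = 0 -> forall i, x i = 0),
      (forall (a : R) x, psi (fun i => a * x i) = `|a| * psi x)
    & (forall x y, psi (fun i => x i + y i) <= psi x + psi y)].

Definition absolute_norm (m : nat) (psi : ('I_m -> R) -> R) : Prop :=
  forall x, psi x = psi (fun i => `|x i|).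

Definition normalized_norm (m : nat) (psi : ('I_m -> R) -> R) : Prop :=
  forall j : 'I_m, psi (fun i => if i == j then 1 else 0) = 1.

Variable m : nat.
Variable X : 'I_m -> normedModType R.

Definition psum := forall i : 'I_m, X i.

Definition psum_add (x y : psum) : psum := fun i => x i + y i.
Definition psum_scale (a : R) (x : psum) : psum := fun i => a *: x i.
Definition psum_sub (x y : psum) : psum := fun i => x i - y i.
Definition psum_zero : psum := fun i => 0.

Variable psi : ('I_m -> R) -> R.

Definition psi_norm (x : psum) : R := psi (fun i => `|x i|).

(* continuous linear functionals on the direct sum (= bounded linear) *)
Definition is_clf (f : psum -> R) : Prop :=
  (forall (a b : R) x y,
      f (psum_add (psum_scale a x) (psum_scale b y)) = a * f x + b * f y) /\
  exists C : R, forall x, `|f x| <= C * psi_norm x.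

Definition weak_nbhd (p : psum) (fs : seq (psum -> R)) (e : R) : set psum :=
  [set x | forall f, f \in fs -> `|f x - f p| < e].

Definition weak_cluster (F : set_system psum) (p : psum) : Prop :=
  forall A fs e, F A -> (forall f, f \in fs -> is_clf f) -> 0 < e ->
    A `&` weak_nbhd p fs e !=set0.

(* compactness in the weak topology (filter characterization, as in
   MathComp-Analysis' [compact]) *)
Definition weakly_compact (K : set psum) : Prop :=
  forall F : set_system psum, ProperFilter F -> F K ->
    exists2 p, K p & weak_cluster F p.

Definition psum_convex (K : set psum) : Prop :=
  forall x y (t : R), K x -> K y -> 0 <= t -> t <= 1 ->
    K (psum_add (psum_scale t x) (psum_scale (1 - t) y)).

Definition diam_eq1 (K : set psum) : Prop :=
  (forall x y, K x -> K y -> psi_norm (psum_sub x y) <= 1) /\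
  (forall e : R, 0 < e -> exists x y, [/\ K x, K y & 1 - e < psi_norm (psum_sub x y)]).

Definition nonexpansive_on (K : set psum) (T : psum -> psum) : Prop :=
  forall x y, K x -> K y ->
    psi_norm (psum_sub (T x) (T y)) <= psi_norm (psum_sub x y).

Definition minimal_invariant (K : set psum) (T : psum -> psum) : Prop :=
  T @` K `<=` K /\
  forall L : set psum, L `<=` K -> L !=set0 -> weakly_compact L ->
    psum_convex L -> T @` L `<=` L -> L = K.

Definition weak_cvg (w : nat -> psum) (p : psum) : Prop :=
  forall f, is_clf f -> forall e : R, 0 < e ->
    exists N : nat, forall n : nat, (N <= n)%N -> `|f (w n) - f p| < e.

Definition approx_fixed_point_seq (K : set psum) (T : psum -> psum)
  (w : nat -> psum) : Prop :=
  (forall n, K (w n)) /\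
  forall e : R, 0 < e ->
    exists N : nat, forall n : nat, (N <= n)%N -> psi_norm (psum_sub (T (w n)) (w n)) < e.

Definition conv (A : set psum) : set psum :=
  [set x | exists (n : nat) (c : 'I_n -> R) (a : 'I_n -> psum),
     [/\ (forall i, 0 <= c i), \sum_(i < n) c i = 1, (forall i, A (a i))
       & x = (fun j => \sum_(i < n) c i *: a i j)]].

(* Dset T w j = D_j^1 for j >= 1 :  D_1 = {w},
   D_{j+1} = conv (D_j U T(D_j)).  (Dset T w 0 = {w} is an unused convention.) *)
Fixpoint Dset (T : psum -> psum) (w : psum) (j : nat) : set psum :=
  match j with
  | j'.+1 => match j' with
             | 0 => [set w]
             | _ => conv (Dset T w j' `|` T @` Dset T w j')
             end
  | 0 => [set w]
  end.

End PsiSum.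

From Pilot Require Import Defs.
From HB Require Import structures.
From mathcomp Require Import all_boot all_order all_algebra.
From mathcomp Require Import all_classical all_reals all_analysis.
From mathcomp Require Import ring lra.
Import Order.TTheory GRing.Theory Num.Theory.
Import numFieldNormedType.Exports.
Local Open Scope classical_set_scope.
Local Open Scope ring_scope.
Set Implicit Arguments.
Unset Strict Implicit.

(* Each point of D_{j+1} lies within j ||T w - w||_psi of w: T moves D_j-points
   at most as far as it moves w (nonexpansiveness plus the triangle inequality),
   and taking convex hulls does not leave a ball.  An absolute normalized norm
   dominates every coordinate, so the last coordinate of such a point is at
   most ||x^(r)_{n_1}|| + (k - 1) ||T w - w|| < k eps_1. *)

Section AbsoluteNorm.
Variables (R : realType) (m : nat) (psi : ('I_m -> R) -> R).
Hypotheses (Hpsi : is_norm_Rn psi) (Habs : absolute_norm psi).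

Lemma psi_zero : psi (fun _ => 0) = 0.
Proof.
case: Hpsi => _ _ psiZ _.
transitivity (psi (fun i => 0 * (fun _ => 0) i)); last by rewrite psiZ normr0 mul0r.
by congr psi; apply: funext => i; rewrite mul0r.
Qed.

(* v' is a convex combination of v and of v with its j-th coordinate negated,
   and the latter has the same norm since psi is absolute. *)
Lemma psi_le_coord (v v' : 'I_m -> R) (j : 'I_m) :
  (forall i, i != j -> v' i = v i) -> `|v' j| <= `|v j| -> psi v' <= psi v.
Proof.
move=> v'E v'j_le; case: Hpsi => _ _ psiZ psiD.
have [vj0|vj_neq0] := eqVneq (v j) 0.
  suff -> : v' = v by [].
  apply: funext => i; have [->|/v'E //] := eqVneq i j.
  by move: v'j_le; rewrite vj0 normr0 normr_le0 => /eqP ->.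
pose vN i := if i == j then - v i else v i.
have psi_vN : psi vN = psi v.
  rewrite Habs [psi v]Habs; congr psi; apply: funext => i.
  by rewrite /vN; case: ifP; rewrite ?normrN.
pose l := (1 + v' j / v j) / 2.
have /andP[l_ge0 l_le1] : 0 <= l <= 1.
  have : `|v' j / v j| <= 1.
    by rewrite normrM normrV ?unitfE // ler_pdivrMr ?normr_gt0 // mul1r.
  rewrite ler_norml => /andP[? ?]; apply/andP; split; rewrite /l; lra.
have -> : v' = (fun i => (fun i => l * v i) i + (fun i => (1 - l) * vN i) i).
  apply: funext => i /=; rewrite /vN.
  have [->|ne] := eqVneq i j; first by rewrite /l; field.
  by rewrite v'E //; ring.
apply: le_trans (psiD _ _) _.
rewrite !psiZ psi_vN ger0_norm // ger0_norm ?subr_ge0 //.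
by rewrite -mulrDl addrC subrK mul1r.
Qed.

Lemma psi_le (x y : 'I_m -> R) : (forall i, `|x i| <= `|y i|) -> psi x <= psi y.
Proof.
move=> xy_le.
pose z k (i : 'I_m) := if (i < k)%N then x i else y i.
suff : forall k, psi (z k) <= psi y.
  by have -> : x = z m by apply: funext => i; rewrite /z ltn_ord.
elim=> [|k IHk].
  by have -> : z 0%N = y by apply: funext => i; rewrite /z ltn0.
apply: le_trans IHk; have [km|mk] := ltnP k m.
  apply: (@psi_le_coord _ _ (Ordinal km)); last first.
    by rewrite /z /= ltnS leqnn ltnn.
  move=> i ne; rewrite /z ltnS leq_eqVlt.
  suff /negbTE -> : val i != k by [].
  by apply: contra ne => /eqP ik; apply/eqP/val_inj.
suff -> : z k.+1 = z k by [].
apply: funext => i; have ik : (i < k)%N := leq_trans (ltn_ord i) mk.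
by rewrite /z ik ltnS ltnW.
Qed.

Lemma coord_le_psi (Hnorm : normalized_norm psi) (x : 'I_m -> R) (j : 'I_m) :
  `|x j| <= psi x.
Proof.
case: Hpsi => _ _ psiZ _.
have <- : psi (fun i => `|x j| * (if i == j then 1 else 0)) = `|x j|.
  by rewrite psiZ Hnorm normr_id mulr1.
rewrite Habs; apply: psi_le => i.
by case: ifP => [/eqP->|_]; rewrite ?mulr1 ?mulr0 ?normr0 ?normr_id.
Qed.

Variable X : 'I_m -> normedModType R.

Lemma psi_normD (x y : psum X) :
  psi_norm psi (psum_add x y) <= psi_norm psi x + psi_norm psi y.
Proof.
case: Hpsi => _ _ _ psiD.
apply: le_trans (psiD (fun i => `|x i|) (fun i => `|y i|)).
by apply: psi_le => i; rewrite normr_id ger0_norm ?addr_ge0 // ler_normD.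
Qed.

Lemma psi_normZ (a : R) (x : psum X) :
  psi_norm psi (psum_scale a x) = `|a| * psi_norm psi x.
Proof.
case: Hpsi => _ _ psiZ _.
rewrite /psi_norm -[`|a|]normr_id -psiZ; congr psi; apply: funext => i.
by rewrite normrZ.
Qed.

Lemma psi_norm0 : psi_norm psi (psum_zero X) = 0.
Proof. by rewrite -psi_zero; congr psi; apply: funext => i; rewrite normr0. Qed.

Lemma coord_le_psi_norm (Hnorm : normalized_norm psi) (x : psum X) (j : 'I_m) :
  `|x j| <= psi_norm psi x.
Proof. by have := coord_le_psi Hnorm (fun i => `|x i|) j; rewrite normr_id. Qed.

Lemma psi_norm_sum n (c : 'I_n -> R) (a : 'I_n -> psum X) :
  psi_norm psi (fun j => \sum_(i < n) c i *: a i j)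
    <= \sum_(i < n) `|c i| * psi_norm psi (a i).
Proof.
elim: n c a => [|n IHn] c a.
  suff -> : (fun j => \sum_(i < 0) c i *: a i j) = psum_zero X.
    by rewrite psi_norm0 big_ord0.
  by apply: functional_extensionality_dep => j; rewrite big_ord0.
have -> : (fun j => \sum_(i < n.+1) c i *: a i j) =
    psum_add (fun j => \sum_(i < n) c (widen_ord (leqnSn n) i) *:
                       a (widen_ord (leqnSn n) i) j)
             (psum_scale (c ord_max) (a ord_max)).
  by apply: functional_extensionality_dep => j; rewrite big_ord_recr.
rewrite big_ord_recr /=; apply: le_trans (psi_normD _ _) _.
by rewrite psi_normZ lerD2r IHn.
Qed.

Lemma psum_convex_sum (K : set (psum X)) n (c : 'I_n -> R) (a : 'I_n -> psum X) :
  psum_convex K -> (forall i, 0 <= c i) -> \sum_(i < n) c i = 1 ->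
  (forall i, K (a i)) -> K (fun j => \sum_(i < n) c i *: a i j).
Proof.
move=> convK; elim: n c a => [|n IHn] c a c_ge0 sum_c aK.
  by move/eqP: sum_c; rewrite big_ord0 eq_sym oner_eq0.
set c' := fun i => c (widen_ord (leqnSn n) i).
set s := \sum_(i < n) c' i.
have sum_cE : s + c ord_max = 1 by rewrite -sum_c big_ord_recr.
have s_ge0 : 0 <= s by apply: sumr_ge0 => i _; exact: c_ge0.
have [s0|s_neq0] := eqVneq s 0.
  have c'0 i : c' i = 0 by apply: (psumr_eq0P (fun i _ => c_ge0 _) s0).
  suff -> : (fun j => \sum_(i < n.+1) c i *: a i j) = a ord_max by [].
  have cmax1 : c ord_max = 1 by rewrite -sum_cE s0 add0r.
  apply: functional_extensionality_dep => j.
  rewrite big_ord_recr big1 => [|i _]; first by rewrite cmax1 scale1r; exact: add0r.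
  by have := c'0 i; rewrite /c' => ->; rewrite scale0r.
have s_gt0 : 0 < s by rewrite lt_def s_neq0.
have -> : (fun j => \sum_(i < n.+1) c i *: a i j) =
    psum_add (psum_scale s (fun j => \sum_(i < n) (c' i / s) *:
                                     a (widen_ord (leqnSn n) i) j))
             (psum_scale (1 - s) (a ord_max)).
  apply: functional_extensionality_dep => j.
  rewrite big_ord_recr /psum_add /psum_scale scaler_sumr.
  have -> : 1 - s = c ord_max by rewrite -sum_cE; ring.
  by congr (_ + _); apply: eq_bigr => i _; rewrite scalerA mulrC divfK.
apply: convK => //; last by rewrite -sum_cE lerDl.
apply: IHn => // [i|]; first by rewrite divr_ge0 ?c_ge0 ?ltW.
by rewrite -mulr_suml divff.
Qed.

End AbsoluteNorm.

Section NonexpansiveOrbit.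
Variables (R : realType) (m : nat) (psi : ('I_m -> R) -> R).
Hypotheses (Hpsi : is_norm_Rn psi) (Habs : absolute_norm psi).
Variables (X : 'I_m -> normedModType R) (K : set (psum X)) (T : psum X -> psum X).
Hypotheses (convK : psum_convex K) (TK : T @` K `<=` K)
  (T_nonexp : nonexpansive_on psi K T).
Variable w0 : psum X.
Hypothesis w0K : K w0.

Let dist (x y : psum X) := psi_norm psi (psum_sub x y).

Lemma conv_ball (A : set (psum X)) (rho : R) u :
  (forall a, A a -> K a /\ dist a w0 <= rho) ->
  Defs.conv A u -> K u /\ dist u w0 <= rho.
Proof.
move=> A_ball [n [c [a [c_ge0 sum_c aA ->]]]].
split; first by apply: psum_convex_sum => // i; case: (A_ball _ (aA i)).
rewrite /dist; have -> : psum_sub (fun j => \sum_(i < n) c i *: a i j) w0 =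
    (fun j => \sum_(i < n) c i *: psum_sub (a i) w0 j).
  apply: functional_extensionality_dep => j; rewrite /psum_sub.
  under [RHS]eq_bigr do rewrite scalerBr.
  by rewrite sumrB -scaler_suml sum_c scale1r.
apply: le_trans (psi_norm_sum Hpsi Habs _ _) _.
apply: (@le_trans _ _ (\sum_(i < n) c i * rho)).
  apply: ler_sum => i _; rewrite ger0_norm //.
  by apply: ler_wpM2l => //; case: (A_ball _ (aA i)).
by rewrite -mulr_suml sum_c mul1r.
Qed.

Lemma dist_T_le v : K v -> dist (T v) w0 <= dist v w0 + dist (T w0) w0.
Proof.
move=> vK; rewrite /dist.
have -> : psum_sub (T v) w0 =
    psum_add (psum_sub (T v) (T w0)) (psum_sub (T w0) w0).
  by apply: functional_extensionality_dep => i; rewrite /psum_add /psum_sub addrA subrK.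
by apply: le_trans (psi_normD Hpsi Habs _ _) _; rewrite lerD2r T_nonexp.
Qed.

Lemma Dset_dist_le j u :
  Dset T w0 j.+1 u -> K u /\ dist u w0 <= j%:R * dist (T w0) w0.
Proof.
have d_ge0 : 0 <= dist (T w0) w0 by case: Hpsi => psi_ge0 _ _ _; exact: psi_ge0.
elim: j u => [|j IHj] u.
  move=> /= ->; split => //; rewrite mul0r /dist.
  suff -> : psum_sub w0 w0 = psum_zero X by rewrite psi_norm0.
  by apply: functional_extensionality_dep => i; rewrite /psum_sub subrr.
apply: conv_ball => a [/IHj [aK a_le] | [v /IHj [vK v_le] <-]].
  by split => //; apply: le_trans a_le _; rewrite ler_wpM2r // ler_nat.
split; first by apply: TK; exists v.
by apply: le_trans (dist_T_le vK) _; rewrite -natr1 mulrDl mul1r lerD2r.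
Qed.

End NonexpansiveOrbit.

Unset Implicit Arguments.

Theorem lemma3p1 (R : realType) (r : nat)
  (X : 'I_r.+1 -> completeNormedModType R)
  (psi : ('I_r.+1 -> R) -> R)
  (Hpsi : is_norm_Rn psi) (Habs : absolute_norm psi) (Hnorm : normalized_norm psi)
  (K : set (psum X)) (T : psum X -> psum X)
  (HTK : T @` K `<=` K)
  (HTne : nonexpansive_on psi K T)
  (HKc : weakly_compact psi K) (HKconv : psum_convex K)
  (HKmin : minimal_invariant psi K T)
  (HKdiam : diam_eq1 psi K)
  (w : nat -> psum X)
  (Hafp : approx_fixed_point_seq psi K T w)
  (Hw0 : weak_cvg psi w (psum_zero X)) (H0K : K (psum_zero X))
  (Hwr : forall e : R, 0 < e ->
     exists N : nat, forall n : nat, (N <= n)%N -> `|w n ord_max| < e)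
  (eps1 : R) (Heps0 : 0 < eps1) (Heps1 : eps1 < 1)
  (k : nat) (Hk : (1 <= k)%N)
  (n1 : nat)
  (Hn1a : psi_norm psi (psum_sub (T (w n1)) (w n1)) < eps1)
  (Hn1b : `|w n1 ord_max| < eps1) :
  forall u : psum X, Dset T (w n1) k u -> `|u ord_max| < k%:R * eps1.
Proof.
have w0K : K (w n1) by case: Hafp.
case: k Hk => // j _ u /(Dset_dist_le Hpsi Habs HKconv HTK HTne w0K) [_ dist_le].
have last_le := coord_le_psi_norm Hpsi Habs Hnorm (psum_sub u (w n1)) ord_max.
have -> : u ord_max = w n1 ord_max + psum_sub u (w n1) ord_max.
  by rewrite /psum_sub addrC subrK.
apply: le_lt_trans (ler_normD _ _) _.
rewrite -natr1 mulrDl mul1r [X in _ < X]addrC ltr_leD //.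
apply: le_trans last_le (le_trans dist_le _).
by rewrite ler_wpM2l // ltW.
Qed.
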